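(* For every point of $\mathbb{R}^8$ and every $\mathfrak{g}$-valued $2$-form $\varphi \in \Lambda^2_+\mathbb{R}^8\otimes\mathfrak{g}$ at that point, \[\sum_{k,l=1}^8 e_k \wedge [F_B(e_k,e_l), i_{e_l}\varphi] \in \Lambda^2_+\mathbb{R}^8 \otimes \mathfrak{g},\] where $F_B$ is the curvature of the connection $B$ described in the context and the bracket is the Lie bracket of $\mathfrak{g}$.
   Context: Write $\mathbb{R}^8 = E \oplus E^\perp$ with orthonormal basis $e_1,\dots,e_4$ of $E$ and $e_1^\perp,\dots,e_4^\perp$ of $E^\perp$; set $e_5=e_1^\perp,\dots,e_8=e_4^\perp$; vectors are identified with covectors via the Euclidean metric; coordinates are $(x,y)$ with $x\in E$ and $y=\sum_k y_k e_k^\perp \in E^\perp$. The $4$-form $\Omega$ is $\Omega = -e_1 e_2 e_1^\perp e_2^\perp - e_1 e_2 e_3^\perp e_4^\perp - e_3 e_4 e_1^\perp e_2^\perp - e_3 e_4 e_3^\perp e_4^\perp + e_1 e_3 e_2^\perp e_4^\perp - e_1 e_3 e_1^\perp e_3^\perp - e_2 e_4 e_2^\perp e_4^\perp + e_2 e_4 e_1^\perp e_3^\perp - e_1 e_4 e_2^\perp e_3^\perp - e_1 e_4 e_1^\perp e_4^\perp - e_2 e_3 e_2^\perp e_3^\perp - e_2 e_3 e_1^\perp e_4^\perp + e_1 e_2 e_3 e_4 + e_1^\perp e_2^\perp e_3^\perp e_4^\perp$ (juxtaposition = wedge). With $*$ the Euclidean Hodge star (orientation $e_1\wedge\dots\wedge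 e_4\wedge e_1^\perp\wedge\dots\wedge e_4^\perp$), $\Lambda^2_+\mathbb{R}^8 = \{\varphi: 3\varphi - *(\Omega\wedge\varphi)=0\}$. Let $\mathfrak{g}\subset \mathfrak{so}(E^\perp)$ be the Lie algebra spanned by $\mathfrak{i},\mathfrak{j},\mathfrak{k}$, where $\mathfrak{i}(e_1^\perp)=-e_2^\perp, \mathfrak{i}(e_2^\perp)=e_1^\perp, \mathfrak{i}(e_3^\perp)=e_4^\perp, \mathfrak{i}(e_4^\perp)=-e_3^\perp$; $\mathfrak{j}(e_1^\perp)=-e_3^\perp, \mathfrak{j}(e_2^\perp)=-e_4^\perp, \mathfrak{j}(e_3^\perp)=e_1^\perp, \mathfrak{j}(e_4^\perp)=e_2^\perp$; $\mathfrak{k}(e_1^\perp)=-e_4^\perp, \mathfrak{k}(e_2^\perp)=e_3^\perp, \mathfrak{k}(e_3^\perp)=-e_2^\perp, \mathfrak{k}(e_4^\perp)=e_1^\perp$. Fix $\varepsilon>0$. $B$ is the $\mathfrak{g}$-valued $1$-form (connection $d+B$) on $\mathbb{R}^8$ with $B(e_i)=0$ for $1\le i\le 4$ and $B(e_1^\perp)=\frac{-y_2\mathfrak{i}-y_3\mathfrak{j}-y_4\mathfrak{k}}{\varepsilon^2+|y|^2}$, $B(e_2^\perp)=\frac{y_1\mathfrak{i}-y_4\mathfrak{j}+y_3\mathfrak{k}}{\varepsilon^2+|y|^2}$, $B(e_3^\perp)=\frac{y_4\mathfrak{i}+y_1\mathfrak{j}-y_2\mathfrak{k}}{\varepsilon^2+|y|^2}$,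 $B(e_4^\perp)=\frac{-y_3\mathfrak{i}+y_2\mathfrak{j}+y_1\mathfrak{k}}{\varepsilon^2+|y|^2}$. Its curvature is $F_B = dB + \frac12[B\wedge B]$, a $\mathfrak{g}$-valued $2$-form. *)

From HB Require Import structures.
From mathcomp Require Import all_boot all_order all_algebra.
From mathcomp Require Import all_classical all_reals all_analysis.
Set Implicit Arguments. Unset Strict Implicit. Unset Printing Implicit Defensive.
Import Order.TTheory GRing.Theory Num.Theory.
Local Open Scope ring_scope.

Section Defs.
Variable R : realType.

(* Points of R^8 = E (+) E^perp : coordinates w.r.t. e_1..e_4, e_1^perp..e_4^perp,
   i.e. indices 0..7 (index 4+c-1 is e_c^perp). *)
Definition pt8 := 'I_8 -> R.

(* ---------- exterior algebra of R^8, valued in an R-module V ----------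
   A xform is given by its coefficients on the basis e_I = e_{i1}^...^e_{ik},
   I = {i1 < ... < ik}. *)
Definition xform (V : lmodType R) := {set 'I_8} -> V.

Definition ninv (I J : {set 'I_8}) : nat :=
  #|[set p : 'I_8 * 'I_8 | (p.1 \in I) && (p.2 \in J) && (p.2 < p.1)%N]|.
Definition sgn (I J : {set 'I_8}) : R := (-1) ^+ ninv I J.

Definition wedge (V : lmodType R) (a : xform R^o) (b : xform V) : xform V :=
  fun K => \sum_(I : {set 'I_8}) \sum_(J : {set 'I_8})
    (if [disjoint I & J] && (I :|: J == K) then (sgn I J * a I) *: b J else 0).

Definition ebasis (k : 'I_8) : xform R^o := fun I => if I == [set k] then 1 else 0.

(* Euclidean Hodge star, orientation e_1^...^e_8:  * e_K = (-1)^{inv(K, ~K)} e_{~K},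
   so that e_K ^ * e_K = e_1^...^e_8 *)
Definition hodge (V : lmodType R) (g : xform V) : xform V :=
  fun I => sgn (~: I) I *: g (~: I).

Definition interior (V : lmodType R) (l : 'I_8) (w : xform V) : xform V :=
  fun J => if l \in J then 0 else sgn [set l] J *: w (l |: J).

Definition e4 (a b c d : nat) : xform R^o :=
  wedge (ebasis (inord a)) (wedge (ebasis (inord b))
    (wedge (ebasis (inord c)) (ebasis (inord d)))).

Definition Omega : xform R^o := fun I =>
  (- e4 0 1 4 5 I - e4 0 1 6 7 I - e4 2 3 4 5 I - e4 2 3 6 7 I
   + e4 0 2 5 7 I - e4 0 2 4 6 I - e4 1 3 5 7 I + e4 1 3 4 6 I
   - e4 0 3 5 6 I - e4 0 3 4 7 I - e4 1 2 5 6 I - e4 1 2 4 7 I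
   + e4 0 1 2 3 I + e4 4 5 6 7 I).

(* ---------- the Lie algebra g inside so(E^perp) = 4x4 matrices ----------
   convention: M i j = coefficient of e_{i+1}^perp in M(e_{j+1}^perp) *)
Definition mx4 (f : nat -> nat -> R) : 'M[R]_4 := \matrix_(i < 4, j < 4) f i j.

Definition gi : 'M[R]_4 := mx4 (fun i j =>
  match i, j with 1%N, 0%N => -1 | 0%N, 1%N => 1 | 3%N, 2%N => 1 | 2%N, 3%N => -1 | _, _ => 0 end).
Definition gj : 'M[R]_4 := mx4 (fun i j =>
  match i, j with 2%N, 0%N => -1 | 3%N, 1%N => -1 | 0%N, 2%N => 1 | 1%N, 3%N => 1 | _, _ => 0 end).
Definition gk : 'M[R]_4 := mx4 (fun i j =>
  match i, j with 3%N, 0%N => -1 | 2%N, 1%N => 1 | 1%N, 2%N => -1 | 0%N, 3%N => 1 | _, _ => 0 end).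

Definition in_g (A : 'M[R]_4) : Prop :=
  exists a b c : R, A = a *: gi + b *: gj + c *: gk.

Definition lie (A C : 'M[R]_4) : 'M[R]_4 := A *m C - C *m A.

Definition in_L2plus_g (phi : xform 'M[R]_4) : Prop :=
  (forall I : {set 'I_8}, #|I| != 2%N -> phi I = 0) /\
  (forall I : {set 'I_8}, in_g (phi I)) /\
  (forall I : {set 'I_8}, 3%:R *: phi I - hodge (wedge Omega phi) I = 0).

Definition ycoord (p : pt8) (c : nat) : R := p (inord (4 + c)).
Definition ynorm2 (p : pt8) : R := \sum_(c < 4) ycoord p c ^+ 2.

Definition Bc (eps : R) (a : 'I_8) (p : pt8) : 'M[R]_4 :=
  let y1 := ycoord p 0 in let y2 := ycoord p 1 in
  let y3 := ycoord p 2 in let y4 := ycoord p 3 in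
  (eps ^+ 2 + ynorm2 p)^-1 *:
  match nat_of_ord a with
  | 4%N => - y2 *: gi - y3 *: gj - y4 *: gk
  | 5%N => y1 *: gi - y4 *: gj + y3 *: gk
  | 6%N => y4 *: gi + y1 *: gj - y2 *: gk
  | 7%N => - y3 *: gi + y2 *: gj + y1 *: gk
  | _ => 0
  end.

Definition shift (p : pt8) (k : 'I_8) (t : R) : pt8 :=
  fun a => p a + (if a == k then t else 0).
Definition pd (k : 'I_8) (f : pt8 -> 'M[R]_4) (p : pt8) : 'M[R]_4 :=
  \matrix_(i < 4, j < 4) derive1 (fun t : R => f (shift p k t) i j) 0.

Definition dB (eps : R) (k l : 'I_8) (p : pt8) : 'M[R]_4 :=
  pd k (Bc eps l) p - pd l (Bc eps k) p.
Definition BwB (eps : R) (k l : 'I_8) (p : pt8) : 'M[R]_4 :=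
  lie (Bc eps k p) (Bc eps l p) - lie (Bc eps l p) (Bc eps k p).
Definition FB (eps : R) (k l : 'I_8) (p : pt8) : 'M[R]_4 :=
  dB eps k l p + 2%:R^-1 *: BwB eps k l p.

Definition Tphi (eps : R) (p : pt8) (phi : xform 'M[R]_4) : xform 'M[R]_4 :=
  fun K => \sum_(k < 8) \sum_(l < 8)
    wedge (ebasis k) (fun J => lie (FB eps k l p) (interior l phi J)) K.

End Defs.

From Pilot Require Import Defs.
From HB Require Import structures.
From mathcomp Require Import all_boot all_order all_algebra.
From mathcomp Require Import all_classical all_reals all_analysis.
From mathcomp Require Import ring.
From Stdlib Require Import PeanoNat.
Set Implicit Arguments. Unset Strict Implicit. Unset Printing Implicit Defensive.
Import Order.TTheory GRing.Theory Num.Theory.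
Local Open Scope ring_scope.

(* B is the pull-back from E^perp of the BPST instanton, so its curvature is
   F_B(e_k, e_l) = 2 eps^2 / (eps^2 + |y|^2)^2 * sum_a omega_a(e_k, e_l) T_a, where
   (T_0, T_1, T_2) = (i, j, k) and omega_0, omega_1, omega_2 are three 2-forms on E^perp.
   Up to that scalar factor the operator of the theorem is therefore
   phi |-> sum_a [T_a, D_a phi], with D_a = sum_(k,l) omega_a(e_k, e_l) e_k /\ i_(e_l) the
   derivation of the exterior algebra induced by omega_a in so(8).  The omega_a lie in
   spin(7), the stabiliser of Omega, so each D_a commutes with phi |-> 3 phi - *(Omega /\ phi),
   whose kernel on 2-forms is Lambda^2_+; the bracket with T_a only acts on the g factor and
   preserves g.  That D_a commutes with 3 - *(Omega /\ .) is checked by computation on the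
   256 basis forms e_I, each I being encoded as a bitmask. *)

(** * Subsets of 'I_8 as bitmasks *)

Definition bit (i : nat) : nat := Nat.pow 2 i.

Definition bset (m : nat) : {set 'I_8} := [set i : 'I_8 | Nat.testbit m i].

Lemma in_bset m i : (i \in bset m) = Nat.testbit m i.
Proof. by rewrite inE. Qed.

Lemma bset1 (i : 'I_8) : [set i] = bset (bit i).
Proof.
apply/setP => j; rewrite !inE /bit Nat.pow2_bits_eqb.
by apply/eqP/Nat.eqb_spec => [->|/val_inj ->].
Qed.

Lemma bsetU m n : bset m :|: bset n = bset (Nat.lor m n).
Proof. by apply/setP => j; rewrite !inE Nat.lor_spec. Qed.

Lemma bsetD m n : bset m :\: bset n = bset (Nat.ldiff m n).
Proof. by apply/setP => j; rewrite !inE Nat.ldiff_spec andbC. Qed.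

Lemma testbit255 (i : 'I_8) : Nat.testbit 255 i.
Proof. by case: i => -[|[|[|[|[|[|[|[|]]]]]]]]. Qed.

Definition bcompl (m : nat) : nat := Nat.lxor m 255.

Lemma bsetC m : ~: bset m = bset (bcompl m).
Proof. by apply/setP => j; rewrite !inE Nat.lxor_spec testbit255; case: Nat.testbit. Qed.

Lemma bset_land255 m : bset m = bset (Nat.land m 255).
Proof. by apply/setP => j; rewrite !inE Nat.land_spec testbit255 andbT. Qed.

Lemma bset_surj (I : {set 'I_8}) : exists2 m, (m < 256)%N & I = bset m.
Proof.
suff [m ->] : exists m, I = bset m.
  exists (Nat.land m 255); last exact: bset_land255.
  by rewrite ltnS; apply/ssrnat.leP/Nat.land_le_r.
have -> : I = [set x in enum I] by apply/setP => x; rewrite !inE mem_enum.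
elim: (enum I) => [|x s [m Em]].
  by exists 0%N; apply/setP => x; rewrite !inE Nat.bits_0.
by exists (Nat.lor (bit x) m); rewrite -bsetU -bset1 -Em; apply/setP => y; rewrite !inE.
Qed.

Definition bits_subset (m n : nat) : bool :=
  all (fun i => Nat.testbit m i ==> Nat.testbit n i) (iota 0 8).

Lemma bset_subset m n : (bset m \subset bset n) = bits_subset m n.
Proof.
apply/fintype.subsetP/allP => [sub i | sub i].
  rewrite mem_iota add0n => /andP [_ lti].
  by apply/implyP; have := sub (Ordinal lti); rewrite !in_bset.
by rewrite !in_bset => mi; move: (sub i); rewrite mem_iota ltn_ord mi => /(_ isT).
Qed.

Lemma big_iota8 (V : nmodType) (F : nat -> V) :
  \sum_(k <- iota 0 8) F k = \sum_(k < 8) F k.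
Proof. by rewrite -(big_mkord xpredT). Qed.

Lemma big_ord8_inord (V : nmodType) (F : 'I_8 -> V) :
  \sum_(k < 8) F k = \sum_(k <- iota 0 8) F (inord k).
Proof. by rewrite big_iota8; apply: eq_bigr => k _; rewrite inord_val. Qed.

Definition ninv_bits (m n : nat) : nat :=
  sumn [seq (Nat.testbit m a && Nat.testbit n b && (b < a)%N : nat)
       | a <- iota 0 8, b <- iota 0 8].

Definition sgn_bits (m n : nat) : int := (-1) ^+ ninv_bits m n.

Lemma ninv_bset m n : ninv (bset m) (bset n) = ninv_bits m n.
Proof.
rewrite /ninv -sum1dep_card big_mkcond /=.
rewrite -(pair_bigA _ (fun a b : 'I_8 =>
  if (a \in bset m) && (b \in bset n) && (b < a)%N then 1%N else 0%N)) /=.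
rewrite /ninv_bits sumnE big_allpairs_dep big_iota8; apply: eq_bigr => a _.
by rewrite big_iota8; apply: eq_bigr => b _; rewrite !in_bset; case: (_ && _).
Qed.

(* A table [T : nat -> seq (int * nat)] describes the operator mapping [psi] to
   [fun I => lincomb (T m) (psi \o bset)] at [I = bset m]; composition of operators is
   [lcomp], and [tables_commute] tests commutation by collecting coefficients. *)
Section IntegerCombinations.
Variable V : zmodType.
Implicit Types (L : seq (int * nat)) (f : nat -> V).

Definition lincomb L f : V := \sum_(t <- L) f t.2 *~ t.1.

Definition coef L (n : nat) : int :=
  foldr (fun t c => if t.2 == n then t.1 + c else c) 0 L.

Definition cancels L : bool := all (fun t => coef L t.2 == 0) L.

Lemma coefE L n : coef L n = \sum_(t <- L | t.2 == n) t.1.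
Proof. by elim: L => [|t L IH]; rewrite ?big_nil // big_cons /= IH. Qed.

Lemma lincomb_coef L f :
  lincomb L f = \sum_(n <- undup (unzip2 L)) f n *~ coef L n.
Proof.
under eq_bigr => n _ do rewrite coefE mulrz_sumr.
rewrite /lincomb (exchange_big_dep xpredT) //=; apply: eq_big_seq => t tL.
rewrite -big_filter (@eq_filter _ _ (pred1 t.2)) => [|n]; last exact: eq_sym.
by rewrite filter_pred1_uniq ?undup_uniq ?mem_undup ?(map_f snd tL) // big_seq1.
Qed.

Lemma cancels_coef L n : cancels L -> coef L n = 0.
Proof.
move=> /allP L0; have [/mapP [t tL ->]|nL] := boolP (n \in unzip2 L).
  exact/eqP/L0.
rewrite coefE big_seq_cond big_pred0 // => t; apply/negbTE; apply: contra nL.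
by move=> /andP [tL /eqP <-]; apply: map_f.
Qed.

Lemma lincomb_cancels L f : cancels L -> lincomb L f = 0.
Proof.
by move=> L0; rewrite lincomb_coef big1 // => n _; rewrite cancels_coef ?mulr0z.
Qed.

Definition lcomp L (M : nat -> seq (int * nat)) : seq (int * nat) :=
  flatten [seq [seq (s.1 * t.1, t.2) | t <- M s.2] | s <- L].

Lemma lincomb_comp L M f :
  lincomb L (fun n => lincomb (M n) f) = lincomb (lcomp L M) f.
Proof.
rewrite /lincomb big_flatten big_map; apply: eq_bigr => s _.
by rewrite big_map mulrz_suml; apply: eq_bigr => t _; rewrite -mulrzA mulrC.
Qed.

Definition lsub L1 L2 : seq (int * nat) := L1 ++ [seq (- t.1, t.2) | t <- L2].

Lemma lincomb_sub L1 L2 f : lincomb (lsub L1 L2) f = lincomb L1 f - lincomb L2 f.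
Proof.
rewrite /lincomb big_cat big_map -sumrN; congr (_ + _).
by apply: eq_bigr => t _; rewrite mulrNz.
Qed.

End IntegerCombinations.

Definition tables_commute (A B : nat -> seq (int * nat)) (m : nat) : bool :=
  cancels (lsub (lcomp (A m) B) (lcomp (B m) A)).

Lemma lincomb_tables_commute (V : zmodType) (A B : nat -> seq (int * nat)) m
    (f : nat -> V) :
  tables_commute A B m ->
  lincomb (A m) (fun n => lincomb (B n) f) = lincomb (B m) (fun n => lincomb (A n) f).
Proof.
move=> /(lincomb_cancels f); rewrite lincomb_sub => /eqP; rewrite subr_eq0 => /eqP.
by rewrite !lincomb_comp.
Qed.

(** * Exterior algebra *)

Definition mask4 (a b c d : nat) : nat :=
  Nat.lor (bit a) (Nat.lor (bit b) (Nat.lor (bit c) (bit d))).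

Definition sign4 (a b c d : nat) : int :=
  sgn_bits (bit a) (Nat.lor (bit b) (Nat.lor (bit c) (bit d))) *
  (sgn_bits (bit b) (Nat.lor (bit c) (bit d)) * sgn_bits (bit c) (bit d)).

Definition distinct4 (a b c d : nat) : bool :=
  [&& (a < 8)%N, (b < 8)%N, (c < 8)%N, (d < 8)%N, ~~ Nat.testbit (bit d) c,
      ~~ Nat.testbit (Nat.lor (bit c) (bit d)) b &
      ~~ Nat.testbit (Nat.lor (bit b) (Nat.lor (bit c) (bit d))) a].

Definition oterm (s : int) (a b c d : nat) := (s, (a, b, c, d)).
Arguments oterm s%_R (a b c d)%_N.

Definition Omega_terms : seq (int * (nat * nat * nat * nat)) :=
  [:: oterm (-1) 0 1 4 5; oterm (-1) 0 1 6 7; oterm (-1) 2 3 4 5; oterm (-1) 2 3 6 7;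
      oterm 1 0 2 5 7; oterm (-1) 0 2 4 6; oterm (-1) 1 3 5 7; oterm 1 1 3 4 6;
      oterm (-1) 0 3 5 6; oterm (-1) 0 3 4 7; oterm (-1) 1 2 5 6; oterm (-1) 1 2 4 7;
      oterm 1 0 1 2 3; oterm 1 4 5 6 7].

Lemma Omega_terms_distinct :
  all (fun t : int * (nat * nat * nat * nat) =>
         let: (_, (a, b, c, d)) := t in distinct4 a b c d) Omega_terms.
Proof. by vm_compute. Qed.

Definition Omega_table : seq (int * nat) :=
  [seq let: (s, (a, b, c, d)) := t in (s * sign4 a b c d, mask4 a b c d) | t <- Omega_terms].

Definition defect_table (m : nat) : seq (int * nat) :=
  (3, m) :: [seq (- sgn_bits (bcompl m) m * (t.1 * sgn_bits t.2 (Nat.ldiff (bcompl m) t.2)),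
                  Nat.ldiff (bcompl m) t.2)
            | t <- Omega_table & bits_subset t.2 (bcompl m)].

Definition glact_table (w : nat -> nat -> int) (m : nat) : seq (int * nat) :=
  [seq let r := Nat.ldiff m (bit kl.1) in
       (w kl.1 kl.2 * sgn_bits (bit kl.1) r * sgn_bits (bit kl.2) r, Nat.lor (bit kl.2) r)
  | kl <- [seq (k, l) | k <- iota 0 8, l <- iota 0 8]
  & [&& w kl.1 kl.2 != 0, Nat.testbit m kl.1 & ~~ Nat.testbit (Nat.ldiff m (bit kl.1)) kl.2]].

Section Exterior.
Variable R : realType.
Implicit Types (V W : lmodType R) (I J K S : {set 'I_8}) (w : nat -> nat -> int).

Lemma sgn_bset m n : sgn R (bset m) (bset n) = (sgn_bits m n)%:~R.
Proof. by rewrite /sgn ninv_bset intr_sign. Qed.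

Definition mono S (c : R) : xform R^o := fun I => if I == S then c else 0.

Lemma wedge_mono V S c (b : xform V) K :
  wedge (mono S c) b K =
  if S \subset K then (sgn R S (K :\: S) * c) *: b (K :\: S) else 0.
Proof.
rewrite /wedge (bigD1 S) //= [X in _ + X]big1 => [|I neIS]; last first.
  by apply: big1 => J _; rewrite /mono (negbTE neIS) mulr0 scale0r if_same.
rewrite /mono eqxx addr0; case: ifP => SK; last first.
  by apply: big1 => J _; case: ifP => // /andP [_ /eqP SJK]; rewrite -SJK finset.subsetUl in SK.
have SKS : [disjoint S & K :\: S].
  by rewrite -setI_eq0; apply/eqP/setP => x; rewrite !inE; case: (x \in S); rewrite ?andbF.
have SKSK : S :|: K :\: S = K.
  apply/setP => x; rewrite !inE; have [xS|] //= := boolP (x \in S).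
  by rewrite (fintype.subsetP SK).
rewrite (bigD1 (K :\: S)) //= SKS SKSK eqxx [X in _ + X]big1 ?addr0 // => J neJ.
case: ifP => // /andP [SJ /eqP SJK]; case/eqP: neJ.
rewrite -SJK finset.setDUl finset.setDv finset.set0U.
by symmetry; apply/finset.setDidPl; rewrite disjoint_sym.
Qed.

Lemma wedge_ebasis V k (b : xform V) K :
  wedge (ebasis R k) b K =
  if k \in K then sgn R [set k] (K :\ k) *: b (K :\ k) else 0.
Proof. by rewrite [ebasis R k]/(mono [set k] 1) wedge_mono finset.sub1set mulr1. Qed.

Lemma wedge_ebasis_mono k S (c : R) : k \notin S ->
  wedge (ebasis R k) (mono S c) = mono (k |: S) (sgn R [set k] S * c).
Proof.
move=> kS; apply/funext => K; rewrite wedge_ebasis /mono.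
have [kK|kK] := boolP (k \in K); last first.
  by case: eqP => // KS; rewrite KS finset.setU11 in kK.
have -> : (K :\ k == S) = (K == k |: S).
  by apply/eqP/eqP => [<-|->]; [rewrite finset.setD1K | rewrite finset.setU1K].
by case: eqP => [->|_]; rewrite ?scaler0 // finset.setU1K.
Qed.

Lemma wedge_suml V T (s : seq T) (a : T -> xform R^o) (b : xform V) K :
  wedge (fun I => \sum_(t <- s) a t I) b K = \sum_(t <- s) wedge (a t) b K.
Proof.
rewrite /wedge [RHS]exchange_big; apply: eq_bigr => I _.
rewrite [RHS]exchange_big; apply: eq_bigr => J _.
case: ifP => _; last by rewrite big1.
by rewrite mulr_sumr scaler_suml.
Qed.

Lemma wedgeD V (a : xform R^o) (b c : xform V) K :
  wedge a (fun J => b J + c J) K = wedge a b K + wedge a c K.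
Proof.
rewrite /wedge -big_split; apply: eq_bigr => I _; rewrite -big_split; apply: eq_bigr => J _.
by case: ifP => _; [exact: scalerDr | exact/esym/addr0].
Qed.

Lemma wedge_map V W (f : V -> W) :
  {morph f : x y / x + y} -> (forall r, {morph f : x / r *: x}) ->
  forall (a : xform R^o) (b : xform V) K, wedge a (fun J => f (b J)) K = f (wedge a b K).
Proof.
move=> fD fZ a b K; have f0 : f 0 = 0 by rewrite -[X in f X](scale0r 0) fZ scale0r.
rewrite /wedge (big_morph f fD f0); apply: eq_bigr => I _.
by rewrite (big_morph f fD f0); apply: eq_bigr => J _; case: ifP; rewrite ?fZ.
Qed.

Lemma e4E a b c d : distinct4 a b c d ->
  e4 R a b c d = mono (bset (mask4 a b c d)) (sign4 a b c d)%:~R.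
Proof.
move=> /and5P [lta ltb ltc ltd /and3P [dc dcb dbcd]].
rewrite /e4 [ebasis R (inord d)]/(mono _ 1) !wedge_ebasis_mono;
  rewrite ?bset1 ?bsetU ?in_bset ?inordK //.
by rewrite !sgn_bset /sign4 /mask4 !intrM mulr1.
Qed.

Lemma Omega_mono :
  Omega R = fun I => \sum_(t <- Omega_table) mono (bset t.2) (t.1)%:~R I.
Proof.
apply/funext => I; rewrite big_map.
transitivity (\sum_(t <- Omega_terms) (t.1)%:~R * e4 R t.2.1.1.1 t.2.1.1.2 t.2.1.2 t.2.2 I).
  by rewrite /Omega; move: (e4 R) => e; rewrite !big_cons big_nil /=; ring.
apply: eq_big_seq => -[s [[[a b] c] d]] t_in /=.
rewrite e4E; last exact: (allP Omega_terms_distinct _ t_in).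
by rewrite /mono intrM; case: ifP; rewrite ?mulr0 ?mulr1.
Qed.

Lemma wedge_Omega_bset V (b : xform V) m :
  wedge (Omega R) b (bset m) =
  \sum_(t <- Omega_table) if bits_subset t.2 m then
    b (bset (Nat.ldiff m t.2)) *~ (t.1 * sgn_bits t.2 (Nat.ldiff m t.2)) else 0.
Proof.
rewrite Omega_mono wedge_suml; apply: eq_bigr => t _.
rewrite wedge_mono bset_subset bsetD sgn_bset.
by case: ifP => _ //; rewrite -scaler_int intrM mulrC.
Qed.

Definition L2plus_defect V (psi : xform V) : xform V :=
  fun I => 3%:R *: psi I - hodge (wedge (Omega R) psi) I.

Lemma L2plus_defect_bset V (psi : xform V) m :
  L2plus_defect psi (bset m) = lincomb (defect_table m) (fun n => psi (bset n)).
Proof.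
rewrite /L2plus_defect /hodge bsetC wedge_Omega_bset /lincomb [defect_table m]/defect_table.
rewrite [RHS]big_cons [X in _ = _ + X]big_map [X in _ = _ + X]big_filter.
rewrite [X in _ = _ + X]big_mkcond scaler_nat sgn_bset scaler_sumr -sumrN.
congr (_ + _); apply: eq_bigr => t _; case: ifP => _; rewrite ?scaler0 ?oppr0 //.
by rewrite /= scaler_int -mulrzA mulNr mulrNz mulrC.
Qed.

Lemma L2plus_defect_map V W (f : V -> W) :
  {morph f : x y / x + y} -> (forall r, {morph f : x / r *: x}) ->
  forall (psi : xform V) I, L2plus_defect (fun K => f (psi K)) I = f (L2plus_defect psi I).
Proof.
move=> fD fZ psi I; have fN x : f (- x) = - f x by rewrite -scaleN1r fZ scaleN1r.
by rewrite /L2plus_defect /hodge (wedge_map fD fZ) fD fN !fZ.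
Qed.

Lemma L2plus_defectD V (psi chi : xform V) I :
  L2plus_defect (fun K => psi K + chi K) I = L2plus_defect psi I + L2plus_defect chi I.
Proof. by rewrite /L2plus_defect /hodge wedgeD !scalerDr opprD addrACA. Qed.

Lemma L2plus_defectZ V (c : R) (psi : xform V) I :
  L2plus_defect (fun K => c *: psi K) I = c *: L2plus_defect psi I.
Proof.
by apply: L2plus_defect_map => [x y | r x]; rewrite ?scalerDr // !scalerA mulrC.
Qed.

(* [glact w] is the action, by derivations of the exterior algebra, of the endomorphism of
   R^8 with matrix [w]: psi |-> sum_(k,l) w k l e_k /\ i_(e_l) psi. *)
Definition glact V w (psi : xform V) : xform V :=
  fun K => \sum_(k < 8) \sum_(l < 8) wedge (ebasis R k) (Defs.interior l psi) K *~ w k l.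

Lemma glact_bset V w (psi : xform V) m :
  glact w psi (bset m) = lincomb (glact_table w m) (fun n => psi (bset n)).
Proof.
rewrite /glact /lincomb big_map big_filter [RHS]big_mkcond [RHS]big_allpairs big_ord8_inord.
apply: eq_big_seq => k; rewrite mem_iota => /andP [_ ltk].
rewrite big_ord8_inord; apply: eq_big_seq => l; rewrite mem_iota => /andP [_ ltl] /=.
rewrite wedge_ebasis /Defs.interior !in_bset !inordK // bset1 inordK // bsetD.
rewrite in_bset inordK // bset1 inordK // bsetU.
have [->|_] := eqVneq (w k l) 0; first by rewrite mulr0z.
case: (Nat.testbit m k) => /=; last by rewrite mul0rz.
case: (Nat.testbit _ l) => /=; first by rewrite scaler0 mul0rz.
by rewrite !sgn_bset !scaler_int -!mulrzA; congr (_ *~ _); ring.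
Qed.

Lemma glact_deg V w (psi : xform V) (d : nat) K :
  (forall J, #|J| != d -> psi J = 0) -> #|K| != d -> glact w psi K = 0.
Proof.
move=> psi0 Kd; apply: big1 => k _; apply: big1 => l _.
rewrite wedge_ebasis /Defs.interior; case: ifP => kK; last by rewrite mul0rz.
case: ifP => lK; first by rewrite scaler0 mul0rz.
rewrite psi0 ?scaler0 ?mul0rz //.
by rewrite cardsU1 lK; rewrite (cardsD1 k K) kK in Kd.
Qed.

Lemma L2plus_defect_glact V w (psi : xform V) I :
  all (tables_commute defect_table (glact_table w)) (iota 0 256) ->
  L2plus_defect (glact w psi) I = glact w (L2plus_defect psi) I.
Proof.
move=> /allP wC; have [m ltm ->] := bset_surj I.
have glactE : (fun n => glact w psi (bset n)) =
              (fun n => lincomb (glact_table w n) (fun n => psi (bset n))).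
  by apply/funext => n; rewrite glact_bset.
have defectE : (fun n => L2plus_defect psi (bset n)) =
               (fun n => lincomb (defect_table n) (fun n => psi (bset n))).
  by apply/funext => n; rewrite L2plus_defect_bset.
rewrite L2plus_defect_bset glact_bset glactE defectE.
by apply/lincomb_tables_commute/wC; rewrite mem_iota.
Qed.

End Exterior.

(** * The 2-forms omega_a lie in spin(7) *)

(* [omega_perp a k l] is omega_a(e_k, e_l) (indices from 0, e_(4+c) = e_(c+1)^perp) for
   omega_0 = e_1^perp e_2^perp - e_3^perp e_4^perp, omega_1 = e_1^perp e_3^perp + e_2^perp e_4^perp
   and omega_2 = e_1^perp e_4^perp - e_2^perp e_3^perp. *)
Section OmegaPerp.
Local Open Scope nat_scope.
Definition omega_perp (a k l : nat) : int :=
  match a, k, l with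
  | 0, 4, 5 | 0, 7, 6 | 1, 4, 6 | 1, 5, 7 | 2, 4, 7 | 2, 6, 5 => 1%R
  | 0, 5, 4 | 0, 6, 7 | 1, 6, 4 | 1, 7, 5 | 2, 7, 4 | 2, 5, 6 => (-1)%R
  | _, _, _ => 0%R
  end.
End OmegaPerp.

Lemma omega_perp_spin7 a : (a < 3)%N ->
  all (tables_commute defect_table (glact_table (omega_perp a))) (iota 0 256).
Proof.
move=> lta; have : all (fun a => all (tables_commute defect_table (glact_table (omega_perp a)))
                                     (iota 0 256)) (iota 0 3) by vm_compute.
by move/allP/(_ a); apply; rewrite mem_iota lta.
Qed.

Section LieAlgebra.
Variable R : realType.
Implicit Types (A B C : 'M[R]_4) (x y z : R).

Lemma lieDl A B C : lie (B + C) A = lie B A + lie C A.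
Proof. by rewrite /lie mulmxDl mulmxDr opprD addrACA. Qed.

Lemma lieDr A : {morph lie A : B C / B + C}.
Proof. by move=> B C; rewrite /lie mulmxDl mulmxDr opprD addrACA. Qed.

Lemma lieZl A B r : lie (r *: B) A = r *: lie B A.
Proof. by rewrite /lie -scalemxAl -scalemxAr scalerBr. Qed.

Lemma lieZr A r : {morph lie A : B / r *: B}.
Proof. by move=> B; rewrite /lie -scalemxAl -scalemxAr scalerBr. Qed.

Lemma lie0r A : lie A 0 = 0.
Proof. by rewrite /lie mulmx0 mul0mx subrr. Qed.

Lemma lie_sumr A (I : Type) (r : seq I) (F : I -> 'M[R]_4) :
  lie A (\sum_(i <- r) F i) = \sum_(i <- r) lie A (F i).
Proof. exact: (big_morph _ (lieDr A) (lie0r A)). Qed.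

Lemma lie_mulrz A B n : lie A (B *~ n) = lie A B *~ n.
Proof. by rewrite -scaler_int lieZr scaler_int. Qed.

Definition gvec x y z : 'M[R]_4 := x *: gi R + y *: gj R + z *: gk R.

Lemma gvecD x y z x' y' z' : gvec x y z + gvec x' y' z' = gvec (x + x') (y + y') (z + z').
Proof.
by rewrite /gvec !scalerDl addrACA -!addrA; congr (_ + _); rewrite addrCA addrA.
Qed.

Lemma gvecN x y z : - gvec x y z = gvec (- x) (- y) (- z).
Proof. by rewrite /gvec !scaleNr !opprD. Qed.

Lemma gvecZ r x y z : r *: gvec x y z = gvec (r * x) (r * y) (r * z).
Proof. by rewrite /gvec !scalerDr !scalerA. Qed.

Lemma lie_gvec x y z x' y' z' :
  lie (gvec x y z) (gvec x' y' z') =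
  gvec (2 * (y * z' - z * y')) (2 * (z * x' - x * z')) (2 * (x * y' - y * x')).
Proof.
apply/matrixP => i j; rewrite !mxE !big_ord_recr !big_ord0 /= !mxE.
by case: i => -[|[|[|[|]]]] // ?; case: j => -[|[|[|[|]]]] //= ?; ring.
Qed.

Lemma in_gvec x y z : in_g (gvec x y z).
Proof. by exists x, y, z. Qed.

Lemma in_g0 : in_g (0 : 'M[R]_4).
Proof. by exists 0, 0, 0; rewrite !scale0r !addr0. Qed.

Lemma in_gD A B : in_g A -> in_g B -> in_g (A + B).
Proof.
move=> [x [y [z ->]]] [x' [y' [z' ->]]].
by rewrite -/(gvec _ _ _) -/(gvec x' y' z') gvecD; apply: in_gvec.
Qed.

Lemma in_gZ r A : in_g A -> in_g (r *: A).
Proof. by move=> [x [y [z ->]]]; rewrite -/(gvec _ _ _) gvecZ; apply: in_gvec. Qed.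

Lemma in_g_mulrz A n : in_g A -> in_g (A *~ n).
Proof. by rewrite -scaler_int; apply: in_gZ. Qed.

Lemma in_g_sum (I : Type) (r : seq I) (F : I -> 'M[R]_4) :
  (forall i, in_g (F i)) -> in_g (\sum_(i <- r) F i).
Proof. by move=> gF; elim/big_ind: _ => //; [exact: in_g0 | exact: in_gD]. Qed.

Lemma in_g_lie A B : in_g A -> in_g B -> in_g (lie A B).
Proof.
move=> [x [y [z ->]]] [x' [y' [z' ->]]].
by rewrite -/(gvec _ _ _) -/(gvec x' y' z') lie_gvec; apply: in_gvec.
Qed.

End LieAlgebra.

(** * The curvature of B *)

Section Curvature.
Variable R : realType.
Implicit Types (eps : R) (p : pt8 R) (k l : 'I_8).

Lemma derive1_ratio_at0 (D a b c d : R) : D != 0 ->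
  derive1 (fun t : R => (D + a * t + b * t ^+ 2)^-1 * (c + d * t)) 0 = d / D - a * c / D ^+ 2.
Proof.
move=> D0; pose g t : R := D + a * t + b * t ^+ 2; pose h t : R := c + d * t.
have dg : is_derive (0 : R) 1 g a.
  apply: is_derive_eq; rewrite add0r mul1r !scale0r !addr0 scaler0 addr0; exact: mulr1.
have dh : is_derive (0 : R) 1 h d by apply: is_derive_eq; rewrite add0r mul1r; exact: mulr1.
have g0 : g 0 != 0 by rewrite /g mulr0 expr0n /= mulr0 !addr0.
rewrite (_ : (fun t => _) = (fun t => (g t)^-1) * h) // derive1E deriveM; last 2 first.
- exact: derivableV.
- by [].
rewrite deriveV // !derive_val /g /h mulr0 expr0n /= mulr0 !addr0 /GRing.scale /=.
by field.
Qed.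

Section Bcoef.
Local Open Scope nat_scope.
Definition Bcoef (l a : nat) (y : nat -> R) : R :=
  match l, a with
  | 4, 0 => (- y 1)%R | 4, 1 => (- y 2)%R | 4, _ => (- y 3)%R
  | 5, 0 => y 0       | 5, 1 => (- y 3)%R | 5, _ => y 2
  | 6, 0 => y 3       | 6, 1 => y 0       | 6, _ => (- y 1)%R
  | 7, 0 => (- y 2)%R | 7, 1 => y 1       | 7, _ => y 0
  | _, _ => 0%R
  end.
End Bcoef.

Lemma BcE eps l q :
  Bc eps l q = (eps ^+ 2 + ynorm2 q)^-1 *:
    gvec (Bcoef l 0 (ycoord q)) (Bcoef l 1 (ycoord q)) (Bcoef l 2 (ycoord q)).
Proof.
rewrite /Bc /gvec /Bcoef; case: l => -[|[|[|[|[|[|[|[|]]]]]]]] //= _;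
  by rewrite ?scaleNr ?scale0r ?addr0 ?scaler0.
Qed.

Definition ydir k (c : nat) : R := if (4 + c == k)%N then 1 else 0.

Lemma ycoord_shift p k t c : (c < 4)%N ->
  ycoord (Defs.shift p k t) c = ycoord p c + ydir k c * t.
Proof.
move=> ltc; rewrite /ycoord /Defs.shift /ydir.
have -> : (inord (4 + c) == k) = (4 + c == k)%N.
  by rewrite -val_eqE /= inordK // -[8%N]/(4 + 4)%N ltn_add2l.
by case: ifP; rewrite ?mul1r ?mul0r.
Qed.

Lemma Bcoef_shift p k t (l a : nat) :
  Bcoef l a (ycoord (Defs.shift p k t)) = Bcoef l a (ycoord p) + t * Bcoef l a (ydir k).
Proof.
rewrite /Bcoef; case: l => [|[|[|[|[|[|[|[|l]]]]]]]]; rewrite ?mulr0 ?addr0 //;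
  by case: a => [|[|a]]; rewrite !ycoord_shift //; ring.
Qed.

Definition ynorm2_slope p k : R :=
  2 * (ycoord p 0 * ydir k 0 + ycoord p 1 * ydir k 1 + ycoord p 2 * ydir k 2
       + ycoord p 3 * ydir k 3).

Lemma ynorm2_shift eps p k t :
  eps ^+ 2 + ynorm2 (Defs.shift p k t) =
  (eps ^+ 2 + ynorm2 p) + ynorm2_slope p k * t
  + (ydir k 0 ^+ 2 + ydir k 1 ^+ 2 + ydir k 2 ^+ 2 + ydir k 3 ^+ 2) * t ^+ 2.
Proof. by rewrite /ynorm2 !big_ord_recr !big_ord0 /= !ycoord_shift // /ynorm2_slope; ring. Qed.

Lemma eps_ynorm2_gt0 eps p : 0 < eps -> 0 < eps ^+ 2 + ynorm2 p.
Proof.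
move=> eps0; apply: ltr_wpDr; last by rewrite exprn_gt0.
by rewrite sumr_ge0 // => c _; rewrite sqr_ge0.
Qed.

Lemma pd_Bc eps p k l : 0 < eps ->
  let D := eps ^+ 2 + ynorm2 p in
  let dB a := Bcoef l a (ydir k) / D - ynorm2_slope p k * Bcoef l a (ycoord p) / D ^+ 2 in
  pd k (Bc eps l) p = gvec (dB 0%N) (dB 1%N) (dB 2%N).
Proof.
move=> eps0 D dB; have D0 : D != 0 by rewrite gt_eqF // eps_ynorm2_gt0.
apply/matrixP => i j; rewrite mxE.
rewrite (_ : (fun t => _) = fun t => (D + ynorm2_slope p k * t
      + (ydir k 0 ^+ 2 + ydir k 1 ^+ 2 + ydir k 2 ^+ 2 + ydir k 3 ^+ 2) * t ^+ 2)^-1 *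
    ((Bcoef l 0 (ycoord p) * gi R i j + Bcoef l 1 (ycoord p) * gj R i j
      + Bcoef l 2 (ycoord p) * gk R i j) +
     (Bcoef l 0 (ydir k) * gi R i j + Bcoef l 1 (ydir k) * gj R i j
      + Bcoef l 2 (ydir k) * gk R i j) * t)); last first.
  by apply/funext => t; rewrite BcE ynorm2_shift /gvec !mxE !Bcoef_shift; ring.
by rewrite derive1_ratio_at0 // /gvec /dB !mxE; field.
Qed.

Definition curv_scale eps p : R := 2 * eps ^+ 2 / (eps ^+ 2 + ynorm2 p) ^+ 2.

Lemma FB_instanton eps p k l : 0 < eps ->
  FB eps k l p = curv_scale eps p *:
    gvec (omega_perp 0 k l)%:~R (omega_perp 1 k l)%:~R (omega_perp 2 k l)%:~R.
Proof.
move=> eps0; have := eps_ynorm2_gt0 p eps0; rewrite lt0r => /andP [D0 _].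
rewrite /FB /dB /BwB !pd_Bc // !BcE !gvecZ !lie_gvec !gvecN !gvecD !gvecZ !gvecD.
move: D0; rewrite /curv_scale /ynorm2 !big_ord_recr big_ord0 /= add0r /ynorm2_slope /ydir => D0.
by congr gvec; case: k => -[|[|[|[|[|[|[|[|]]]]]]]] // ?;
  case: l => -[|[|[|[|[|[|[|[|]]]]]]]] //= ?; field.
Qed.

End Curvature.

Section BracketAction.
Variable R : realType.
Implicit Types (phi : xform 'M[R]_4) (I J K : {set 'I_8}).

Lemma in_g_glact (w : nat -> nat -> int) phi K :
  (forall J, in_g (phi J)) -> in_g (glact w phi K).
Proof.
move=> phig; apply: in_g_sum => k; apply: in_g_sum => l; apply: in_g_mulrz.
rewrite wedge_ebasis /Defs.interior; case: ifP => _; last exact: in_g0.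
by apply: in_gZ; case: ifP => _; [exact: in_g0 | exact: in_gZ].
Qed.

Definition bracket_action phi : xform 'M[R]_4 := fun K =>
  lie (gi R) (glact (omega_perp 0) phi K) + lie (gj R) (glact (omega_perp 1) phi K)
  + lie (gk R) (glact (omega_perp 2) phi K).

Lemma Tphi_bracket_action eps p phi : 0 < eps ->
  Tphi eps p phi = fun K => curv_scale eps p *: bracket_action phi K.
Proof.
move=> eps0; apply/funext => K; rewrite /Tphi /bracket_action /glact.
rewrite !lie_sumr -!big_split scaler_sumr; apply: eq_bigr => k _.
rewrite !lie_sumr -!big_split scaler_sumr; apply: eq_bigr => l _.
rewrite (wedge_map (lieDr _) (lieZr _)) FB_instanton // lieZl /gvec !lieDl !lieZl.
by rewrite !scaler_int !lie_mulrz.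
Qed.

Lemma bracket_action_deg phi (d : nat) K :
  (forall J, #|J| != d -> phi J = 0) -> #|K| != d -> bracket_action phi K = 0.
Proof. by move=> phi0 Kd; rewrite /bracket_action !(glact_deg _ phi0) // !lie0r !addr0. Qed.

Lemma in_g_bracket_action phi K : (forall J, in_g (phi J)) -> in_g (bracket_action phi K).
Proof.
move=> phig; have [gi_g gj_g gk_g] : [/\ in_g (gi R), in_g (gj R) & in_g (gk R)].
  by split; [exists 1, 0, 0 | exists 0, 1, 0 | exists 0, 0, 1];
    rewrite !scale1r !scale0r ?addr0 ?add0r.
by apply: in_gD; [apply: in_gD|]; apply: in_g_lie => //; apply: in_g_glact.
Qed.

Lemma L2plus_defect_bracket_action phi I :
  L2plus_defect (bracket_action phi) I = bracket_action (L2plus_defect phi) I.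
Proof.
rewrite /bracket_action 2!L2plus_defectD !(L2plus_defect_map (lieDr _) (lieZr _)).
by rewrite !L2plus_defect_glact ?omega_perp_spin7.
Qed.

Lemma bracket_action0 K : bracket_action (fun _ => 0) K = 0.
Proof. by apply: (bracket_action_deg (d := #|K|.+1)); rewrite // neq_ltn ltnSn. Qed.

End BracketAction.

Theorem lemma2p2 (R : realType) (eps : R) (heps : 0 < eps)
  (p : pt8 R) (phi : xform 'M[R]_4) :
  in_L2plus_g phi -> in_L2plus_g (Tphi eps p phi).
Proof.
move=> [phi2 [phig phiP]]; rewrite Tphi_bracket_action //.
split; [|split] => I.
- by move=> I2; rewrite (bracket_action_deg phi2) // scaler0.
- exact/in_gZ/in_g_bracket_action.
- change (L2plus_defect (fun K => curv_scale eps p *: bracket_action phi K) I = 0).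
  rewrite L2plus_defectZ L2plus_defect_bracket_action.
  by rewrite (_ : L2plus_defect phi = fun _ => 0) ?bracket_action0 ?scaler0 //; apply: funext.
Qed.
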